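(* Let $c_1\ge\dots\ge c_{m+1}\ge0$ and $d_1\ge\dots\ge d_m\ge0$ be integers. Let $(r_1,r_2,\dots)$ and $(s_1,s_2,\dots)$ be the conjugate partitions of $(c_1,\dots,c_{m+1})$ and $(d_1,\dots,d_m)$, and $r_0=m+1=s_0+1$. Let $g=\max\{i\ge0: r_i>s_i\}$ and $h=\min\{i\ge1: d_i<c_i\}$, with the convention $d_{m+1}=-\infty$. Then $g=c_h$ and $$\sum_{j=1}^{g}(r_j-s_j-1)=\sum_{j=h}^{m}(c_{j+1}-d_j).$$
   Context: The conjugate of a finite nonincreasing sequence $(a_1,\dots,a_n)$ of nonnegative integers is $(\bar a_1,\bar a_2,\dots)$ with $\bar a_k=\#\{i: a_i\ge k\}$ for $k\ge1$. *)

From mathcomp Require Import all_boot all_order all_algebra.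
Set Implicit Arguments. Unset Strict Implicit. Unset Printing Implicit Defensive.
Import GRing.Theory Num.Theory.

(* A finite sequence (a_1,...,a_n) is encoded as a function a : nat -> nat,
   only the values a 1, ..., a n being relevant (1-based indexing). *)

(* Conjugate: conj_part n a k = #{ i in 1..n : a_i >= k }.
   For k = 0 this is n, matching r_0 = m+1 and s_0 = m. *)
Definition conj_part (n : nat) (a : nat -> nat) (k : nat) : nat :=
  count (fun i => k <= a i) (iota 1 n).

Definition is_gidx (r s : nat -> nat) (g : nat) : Prop :=
  s g < r g /\ (forall i, s i < r i -> i <= g).

(* h is the minimum of { i >= 1 : d_i < c_i } with d_{m+1} = -infinity,
   i.e. i ranges over 1..m+1 and i = m+1 always qualifies. *)
Definition is_hidx (m : nat) (c d : nat -> nat) (h : nat) : Prop :=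
  [/\ 1 <= h <= m.+1, (h = m.+1 \/ d h < c h)
    & forall i, 1 <= i -> i < h -> i <= m /\ c i <= d i].

(* With k := c_h one has c_1, ..., c_h >= k > d_h, ..., d_m, so r_k >= h > s_k;
   above k only the c_i with i < h count, and those satisfy c_i <= d_i, so
   r_j <= s_j for j > k.  Summing conjugates gives
   sum_(j <= g) r_j = sum_i min(c_i, g), and truncating at g = c_h replaces
   c_1, ..., c_h and d_1, ..., d_(h-1) by g while leaving the other parts
   unchanged; the g-terms cancel against the -1's. *)
From mathcomp Require Import all_boot all_order all_algebra zify.

Set Implicit Arguments.
Unset Strict Implicit.
Unset Printing Implicit Defensive.

Import GRing.Theory Num.Theory.

Definition nonincreasing_on (n : nat) (a : nat -> nat) : Prop :=
  forall i, 1 <= i < n -> a i.+1 <= a i.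

Lemma nonincreasing_on_leq n a : nonincreasing_on n a ->
  forall i j, 1 <= i <= j -> j <= n -> a j <= a i.
Proof.
move=> a_noninc i j /andP[i_gt0 le_ij]; rewrite -(subnKC le_ij).
elim: (j - i) => [|k IHk] le_n; first by rewrite addn0.
by apply: leq_trans (IHk _); [rewrite addnS; apply: a_noninc|]; lia.
Qed.

Section Conjugate.

Variables (n : nat) (a : nat -> nat).

Lemma conj_part_le_size k : conj_part n a k <= n.
Proof. by rewrite -[leqRHS](size_iota 1) count_size. Qed.

Lemma conj_partE k : conj_part n a k = \sum_(1 <= i < n.+1) (k <= a i).
Proof.
rewrite /conj_part -sum1_count big_mkcond /index_iota subSS subn0.
by apply: eq_bigr => i _; case: (k <= a i).
Qed.

Lemma leq_conj_part : nonincreasing_on n a -> forall k p, 1 <= p <= n ->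
  (p <= conj_part n a k) = (k <= a p).
Proof.
move=> /nonincreasing_on_leq a_noninc k p /andP[p_gt0 le_pn]; rewrite /conj_part.
have [le_k_ap | lt_ap_k] := leqP k (a p).
  rewrite -(subnKC le_pn) iotaD count_cat.
  have -> : count (fun i => k <= a i) (iota 1 p) = p.
    apply/eqP; rewrite -[p in _ == p](size_iota 1) -all_count.
    apply/allP => i; rewrite mem_iota => /andP[i_gt0 lt_i_p].
    by apply: leq_trans le_k_ap (a_noninc _ _ _ _); lia.
  exact: leq_addr.
apply/negbTE; rewrite -ltnNge -(subnKC (leq_trans (leq_pred p) le_pn)).
rewrite iotaD count_cat.
have -> : count (fun i => k <= a i) (iota (1 + p.-1) (n - p.-1)) = 0.
  apply/eqP; rewrite -leqn0 leqNgt -has_count; apply/hasPn => i.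
  rewrite mem_iota -ltnNge => /andP[le_p_i lt_i_n].
  by apply: leq_ltn_trans lt_ap_k; apply: a_noninc; lia.
rewrite addn0; apply: leq_ltn_trans (count_size _ _) _.
by rewrite size_iota; lia.
Qed.

Lemma sum_leq_minn x y : \sum_(1 <= j < y.+1) (j <= x) = minn x y.
Proof.
elim: y => [|y IHy]; first by rewrite big_geq // minn0.
by rewrite big_nat_recr //= IHy; case: (leqP y.+1 x) => /=; lia.
Qed.

Lemma sum_conj_part x :
  \sum_(1 <= j < x.+1) conj_part n a j = \sum_(1 <= i < n.+1) minn (a i) x.
Proof.
under eq_bigr do rewrite conj_partE.
by rewrite exchange_big_nat /=; apply: eq_bigr => i _; rewrite sum_leq_minn.
Qed.

Lemma sum_minn_split x p : 1 <= p <= n.+1 ->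
    (forall i, 1 <= i < p -> x <= a i) -> (forall i, p <= i <= n -> a i <= x) ->
  \sum_(1 <= i < n.+1) minn (a i) x = p.-1 * x + \sum_(p <= i < n.+1) a i.
Proof.
move=> /andP[p_gt0 le_p_n1] a_ge_x a_le_x.
rewrite (big_cat_nat p_gt0 le_p_n1) /=; congr (_ + _).
  rewrite (eq_big_nat _ _ (F2 := fun=> x)) ?sum_nat_const_nat ?subn1 // => i.
  by move=> /a_ge_x /minn_idPr.
by apply: eq_big_nat => i /andP[le_p_i lt_i_n]; apply/minn_idPl/a_le_x/andP.
Qed.

End Conjugate.

Lemma is_gidx_eq r s g k : s k < r k -> (forall j, k < j -> r j <= s j) ->
  is_gidx r s g -> g = k.
Proof.
move=> gap_k no_gap [gap_g g_max]; apply/eqP; rewrite eqn_leq g_max // andbT.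
by rewrite leqNgt; apply/negP => /no_gap; rewrite leqNgt gap_g.
Qed.

Section Interlacing.

Variables (m : nat) (c d : nat -> nat) (h : nat).
Hypotheses (c_noninc : nonincreasing_on m.+1 c) (d_noninc : nonincreasing_on m d).
Hypothesis h_idx : is_hidx m c d h.

Let h_bounds : 1 <= h <= m.+1.
Proof. by case: h_idx. Qed.

Let c_le_d i : 1 <= i < h -> i <= m /\ c i <= d i.
Proof. by case: h_idx => _ _ /(_ i); lia. Qed.

Let ch_le_c i : 1 <= i <= h -> c h <= c i.
Proof. by move=> i_bounds; apply: (nonincreasing_on_leq c_noninc); lia. Qed.

Let c_le_ch i : h <= i <= m.+1 -> c i <= c h.
Proof. by move=> i_bounds; apply: (nonincreasing_on_leq c_noninc); lia. Qed.

Let d_lt_ch i : h <= i <= m -> d i < c h.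
Proof.
move=> /andP[le_h_i le_i_m]; case: h_idx => _ [h_top|dh_lt_ch] _; first lia.
by apply: leq_ltn_trans dh_lt_ch; apply: (nonincreasing_on_leq d_noninc); lia.
Qed.

Lemma conj_part_gap_at_ch : conj_part m d (c h) < conj_part m.+1 c (c h).
Proof.
apply: (@leq_trans h); last by rewrite leq_conj_part.
have [h_top | h_ne_top] := eqVneq h m.+1; first by rewrite h_top ltnS conj_part_le_size.
by rewrite ltnNge leq_conj_part -?ltnNge ?d_lt_ch //; lia.
Qed.

Lemma conj_part_no_gap_above k : c h < k -> conj_part m.+1 c k <= conj_part m d k.
Proof.
move=> lt_ch_k; set p := conj_part m.+1 c k.
have [-> // | p_gt0] := posnP p.
have p_bounds : 1 <= p <= m.+1 by rewrite p_gt0 conj_part_le_size.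
have le_k_cp : k <= c p by rewrite -(leq_conj_part c_noninc).
have lt_p_h : p < h.
  rewrite ltnNge; apply/negP => le_h_p.
  have : c p <= c h by apply: c_le_ch; lia.
  lia.
have [le_p_m le_cp_dp] : p <= m /\ c p <= d p by apply: c_le_d; lia.
by rewrite leq_conj_part ?(leq_trans le_k_cp) // p_gt0.
Qed.

Lemma sum_minn_c_ch :
  \sum_(1 <= i < m.+2) minn (c i) (c h) = h * c h + \sum_(h <= i < m.+1) c i.+1.
Proof.
rewrite (sum_minn_split (p := h.+1)) ?big_add1 //; first lia.
by move=> i i_bounds; apply: c_le_ch; lia.
Qed.

Lemma sum_minn_d_ch :
  \sum_(1 <= i < m.+1) minn (d i) (c h) = h.-1 * c h + \sum_(h <= i < m.+1) d i.
Proof.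
rewrite (sum_minn_split (p := h)) //.
- move=> i i_bounds; have [_] := c_le_d i_bounds.
  by apply/leq_trans/ch_le_c; lia.
- by move=> i /d_lt_ch /ltnW.
Qed.

End Interlacing.

Local Open Scope ring_scope.

Theorem lemma4p4 (m : nat) (c d : nat -> nat)
  (hc : forall i : nat, (1 <= i <= m)%N -> (c i.+1 <= c i)%N)
  (hd : forall i : nat, (1 <= i < m)%N -> (d i.+1 <= d i)%N)
  (g h : nat)
  (hg : is_gidx (conj_part m.+1 c) (conj_part m d) g)
  (hh : is_hidx m c d h) :
  g = c h /\
  \sum_(1 <= j < g.+1)
     ((conj_part m.+1 c j)%:Z - (conj_part m d j)%:Z - 1)
  = \sum_(h <= j < m.+1) ((c j.+1)%:Z - (d j)%:Z).
Proof.
have gE : g = c h.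
  apply: is_gidx_eq hg; first exact: conj_part_gap_at_ch hc hd hh.
  exact: conj_part_no_gap_above hc hd hh.
split=> //; have h_gt0 : (0 < h)%N by case: hh => /andP[].
rewrite !sumrB sumr_const_nat -!(big_morph _ PoszD (erefl 0%:Z)).
rewrite !sum_conj_part gE (sum_minn_c_ch hc hh) (sum_minn_d_ch hc hd hh).
by rewrite -[h in (h * _)%N](prednK h_gt0) mulSn subSS subn0 natz; lia.
Qed.
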